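(* Let $X$ be a finite connected poset and $K$ a field. For any $\theta\in\mathcal{M}(X)$ there exists a map $\sigma:X^2_<\to K^*$ compatible with $\theta$.
   Context: $X^2_<=\{(x,y)\in X^2: x<y\}$ and $K^*=K\setminus\{0\}$. For $x\le y$, $e_{xy}$ denotes the element of the incidence algebra $I(X,K)$ (functions $X\times X\to K$ vanishing off $\{x\le y\}$, with product $(fg)(x,y)=\sum_{x\le z\le y}f(x,z)g(z,y)$) equal to $1$ at $(x,y)$ and $0$ elsewhere; $B=\{e_{xy}:x<y\}$. For a bijection $\theta:B\to B$ and a maximal chain $C:u_1<\dots<u_m$, $\theta$ is increasing on $C$ if there is a maximal chain $D:v_1<\dots<v_m$ with $\theta(e_{u_iu_j})=e_{v_iv_j}$ for all $i<j$, decreasing if $\theta(e_{u_iu_j})=e_{v_{m-j+1}v_{m-i+1}}$ for all $i<j$. $\mathcal{M}(X)$ is the set of bijections $B\to B$ increasing or decreasing on every maximal chain. A map $\sigma:X^2_<\to K^*$ is compatible with a bijection $\theta:B\to B$ if, for all $x<y<z$, $\sigma(x,z)=\sigma(x,y)\sigma(y,z)$ whenever $\theta(e_{xz})=\theta(e_{xy})\theta(e_{yz})$, and $\sigma(x,z)=-\sigma(x,y)\sigma(y,z)$ whenever $\theta(e_{xz})=\theta(e_{yz})\theta(e_{xy})$ (products in $I(X,K)$). *)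

From HB Require Import structures.
From mathcomp Require Import all_boot all_order all_algebra.
Set Implicit Arguments. Unset Strict Implicit. Unset Printing Implicit Defensive.
Import Order.TTheory GRing.Theory.

Section Incidence.
Variables (d : Order.disp_t) (X : finPOrderType d) (K : fieldType).

Definition connected_poset : Prop :=
  forall x y : X, connect (fun a b : X => (a >=< b)%O) x y.

(* Elements of the incidence algebra I(X,K): functions X*X -> K
   (we only ever use ones vanishing off x <= y). *)
Definition incalg := {ffun X * X -> K}.

Definition incmul (f g : incalg) : incalg :=
  [ffun p : X * X => (\sum_(z : X | ((p.1 <= z)%O && (z <= p.2)%O))
                        f (p.1, z) * g (z, p.2))%R].

Definition e_ (x y : X) : incalg :=
  [ffun p : X * X => ((p.1 == x) && (p.2 == y))%:R%R].

Definition ltpair := {p : X * X | (p.1 < p.2)%O}.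

Definition eB (p : ltpair) : incalg := e_ (val p).1 (val p).2.

Definition is_chain (s : seq X) : Prop := sorted (fun a b : X => (a < b)%O) s.

Definition maximal_chain (s : seq X) : Prop :=
  is_chain s /\ forall t, is_chain t -> {subset s <= t} -> {subset t <= s}.

Definition increasing_on (theta : ltpair -> ltpair) (s : seq X) : Prop :=
  exists t : seq X, maximal_chain t /\ size t = size s /\
    forall (p : ltpair) (i j : nat), i < j < size s ->
      val p = (nth (val p).1 s i, nth (val p).1 s j) ->
      val (theta p) = (nth (val p).1 t i, nth (val p).1 t j).

(* theta decreasing on C: theta(e_{u_i u_j}) = e_{v_{m-j+1} v_{m-i+1}}
   (1-indexed), i.e. indices m-1-j, m-1-i when 0-indexed. *)
Definition decreasing_on (theta : ltpair -> ltpair) (s : seq X) : Prop :=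
  exists t : seq X, maximal_chain t /\ size t = size s /\
    forall (p : ltpair) (i j : nat), i < j < size s ->
      val p = (nth (val p).1 s i, nth (val p).1 s j) ->
      val (theta p) = (nth (val p).1 t (size s - j.+1),
                       nth (val p).1 t (size s - i.+1)).

Definition in_M (theta : ltpair -> ltpair) : Prop :=
  bijective theta /\
  forall s, maximal_chain s -> increasing_on theta s \/ decreasing_on theta s.

Definition compatible (sigma : ltpair -> K) (theta : ltpair -> ltpair) : Prop :=
  forall (x y z : X) (pxy pyz pxz : ltpair),
    val pxy = (x, y) -> val pyz = (y, z) -> val pxz = (x, z) ->
    (eB (theta pxz) = incmul (eB (theta pxy)) (eB (theta pyz)) ->
       sigma pxz = (sigma pxy * sigma pyz)%R) /\
    (eB (theta pxz) = incmul (eB (theta pyz)) (eB (theta pxy)) ->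
       sigma pxz = (- (sigma pxy * sigma pyz))%R).

End Incidence.

(* For x < y < z, say that θ flips the triple when θ(e_xz) = θ(e_yz)θ(e_xy)
   rather than θ(e_xy)θ(e_yz). As θ is increasing or decreasing on every
   maximal chain, flipping is constant on the triples of any chain. It also
   does not depend on the bottom element: if a < b < c is not flipped but
   e < b < c is, splice a maximal chain through a, b, c (below b) with one
   through e, b, c (above b); comparing the two chains forces c to be the top of
   the second, so θ(e_bc) starts at the minimum of a maximal chain and also
   strictly above an element of another one, which is absurd. Hence
   σ(x,y) = -1 if some e < x flips (e, x, y), and 1 otherwise, satisfies
   σ(x,z) = ±σ(x,y)σ(y,z) with the sign '-' exactly when (x, y, z) is flipped. *)

From HB Require Import structures.
From mathcomp Require Import all_boot all_order all_algebra.
From mathcomp Require Import zify.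
From Stdlib Require Import Classical.
Set Implicit Arguments. Unset Strict Implicit. Unset Printing Implicit Defensive.
Import Order.TTheory GRing.Theory.

Section Chains.
Variables (d : Order.disp_t) (X : finPOrderType d).
Implicit Types (s t C : seq X) (b u x y : X).

Lemma chain_nth_lt s x0 i j :
  is_chain s -> i < j < size s -> (nth x0 s i < nth x0 s j)%O.
Proof.
move=> hs /andP[hij hj]; apply: (sorted_ltn_nth lt_trans) => //.
by rewrite inE (ltn_trans hij).
Qed.

Lemma chain_nth_le s x0 i j :
  is_chain s -> i <= j < size s -> (nth x0 s i <= nth x0 s j)%O.
Proof.
move=> hs /andP[]; rewrite leq_eqVlt => /predU1P[-> //|hij] hj.
by rewrite ltW // chain_nth_lt ?hij.
Qed.

Lemma chain_index_lt s x y :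
  is_chain s -> x \in s -> y \in s -> (x < y)%O -> index x s < index y s.
Proof.
move=> hs hx hy hxy; rewrite ltnNge; apply/negP => hyx.
have := chain_nth_le x hs (i := index y s) (j := index x s).
by rewrite hyx index_mem hx !nth_index // => /(_ isT) /(lt_le_trans hxy); rewrite ltxx.
Qed.

Lemma chain_comparable s x y : is_chain s -> x \in s -> y \in s -> (x >=< y)%O.
Proof.
move=> hs hx hy; rewrite -(nth_index x hx) -(nth_index x hy).
case: (leqP (index x s) (index y s)) => hxy.
  by rewrite le_comparable // chain_nth_le ?hxy ?index_mem.
by rewrite ge_comparable // chain_nth_le ?(ltnW hxy) ?index_mem.
Qed.

Lemma chain_size_le_card s : is_chain s -> size s <= #|X|.
Proof. by move/lt_sorted_uniq/card_uniqP <-; apply: max_card. Qed.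

Lemma sort_chain s :
  uniq s -> {in s &, forall x y, (x >=< y)%O} -> is_chain (sort <=%O s).
Proof.
move=> hu hc; rewrite /is_chain lt_sorted_uniq_le sort_uniq hu /=.
by apply: (sort_sorted_in (P := mem s)) => //; apply/allP.
Qed.

Lemma maximal_chain_mem C u :
  maximal_chain C -> {in C, forall y, (u >=< y)%O} -> u \in C.
Proof.
move=> [hC hmax] hu; apply/negPn/negP => huC.
have hcmp : {in u :: C &, forall x y, (x >=< y)%O}.
  move=> x y; rewrite !inE => /predU1P[->|hx] /predU1P[->|hy].
  - exact: comparablexx.
  - exact: hu.
  - by rewrite comparable_sym hu.
  - exact: chain_comparable hC hx hy.
have huniq : uniq (u :: C) by rewrite /= huC lt_sorted_uniq.
have hsort := sort_chain huniq hcmp.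
have hCsort : {subset C <= sort <=%O (u :: C)}.
  by move=> y hy; rewrite mem_sort inE hy orbT.
by move: (hmax _ hsort hCsort u); rewrite mem_sort mem_head (negbTE huC) => /(_ isT).
Qed.

Lemma maximal_chain_head C x0 u : maximal_chain C -> ~ (u < nth x0 C 0)%O.
Proof.
move=> hC hu; have [hCc _] := hC.
have hCu : {in C, forall y, (u <= y)%O}.
  move=> y hy; rewrite (ltW (lt_le_trans hu _)) //.
  by rewrite -(nth_index x0 hy) chain_nth_le ?index_mem.
have huC : u \in C by apply: maximal_chain_mem => // y /hCu /le_comparable.
have := chain_nth_le x0 hCc (i := 0) (j := index u C).
by rewrite index_mem huC nth_index // => /(_ isT) /(lt_le_trans hu); rewrite ltxx.
Qed.

Lemma chain_grow t : is_chain t -> ~ maximal_chain t ->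
  exists2 t', is_chain t' & {subset t <= t'} /\ size t < size t'.
Proof.
move=> ht hmax.
have [t' ht' [htt' [u hut' hut]]] : exists2 t', is_chain t' &
    {subset t <= t'} /\ exists2 u, u \in t' & u \notin t.
  apply: NNPP => hno; apply: hmax; split => // t' ht' htt' u hut'.
  by apply: NNPP => hut; apply: hno; exists t' => //; split => //; exists u => //; apply/negP.
exists t' => //; split => //.
have huniq : uniq (u :: t) by rewrite /= hut lt_sorted_uniq.
by apply: (uniq_leq_size huniq) => y /predU1P[-> //|/htt'].
Qed.

Lemma maximal_chain_extend s : is_chain s -> exists2 C, maximal_chain C & {subset s <= C}.
Proof.
have [n] := ubnP (#|X| - size s); elim: n s => // n IH t hn ht.
case: (classic (maximal_chain t)) => hmax; first by exists t.
have [t' ht' [htt' hlt]] := chain_grow ht hmax.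
have [|C hC ht'C] := IH t' _ ht'; first by have := chain_size_le_card ht'; lia.
by exists C => // y /htt' /ht'C.
Qed.

Definition splice C1 C2 b :=
  [seq x <- C1 | (x <= b)%O] ++ [seq x <- C2 | (b < x)%O].

Lemma mem_splice C1 C2 b u :
  (u \in splice C1 C2 b) = ((u \in C1) && (u <= b)%O) || ((u \in C2) && (b < u)%O).
Proof. by rewrite mem_cat !mem_filter !(andbC (_ \in _)). Qed.

Lemma splice_chain C1 C2 b : is_chain C1 -> is_chain C2 -> is_chain (splice C1 C2 b).
Proof.
move=> hC1 hC2; rewrite /is_chain (sorted_pairwise lt_trans) pairwise_cat.
rewrite -!(sorted_pairwise lt_trans) !(sorted_filter lt_trans) // !andbT.
apply/seq.allrelP => x y; rewrite !mem_filter => /andP[hx _] /andP[hy _].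
exact: le_lt_trans hx hy.
Qed.

Lemma maximal_chain_splice C1 C2 b : maximal_chain C1 -> maximal_chain C2 ->
  b \in C1 -> b \in C2 -> maximal_chain (splice C1 C2 b).
Proof.
move=> hC1 hC2 hb1 hb2; have [hC1c _] := hC1; have [hC2c _] := hC2.
split=> [|t ht hsub u hu]; first exact: splice_chain.
have hbt : b \in t by apply: hsub; rewrite mem_splice hb1 lexx.
have hcmp y : y \in splice C1 C2 b -> (u >=< y)%O.
  by move/hsub; apply: chain_comparable ht hu.
rewrite mem_splice; case: (comparable_ltgtP (chain_comparable ht hu hbt)) => hub /=.
- rewrite andbT andbF orbF; apply: maximal_chain_mem => // y hy.
  case: (comparable_leP (chain_comparable hC1c hy hb1)) => hyb.
    by apply: hcmp; rewrite mem_splice hy hyb.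
  by rewrite le_comparable // ltW // (lt_trans hub).
- rewrite andbT andbF; apply: maximal_chain_mem => // y hy.
  case: (comparable_ltP (chain_comparable hC2c hb2 hy)) => hby.
    by apply: hcmp; rewrite mem_splice hy hby orbT.
  by rewrite ge_comparable // (le_trans hby) // ltW.
- by rewrite hub hb1.
Qed.

Lemma chain_last_index C b c : is_chain C -> c \in C -> (b < c)%O ->
  {in C, forall u, (b < u)%O -> u = c} -> (index c C).+1 = size C.
Proof.
move=> hC hc hbc htop; apply/eqP; rewrite eqn_leq index_mem hc leqNgt /=.
apply/negP => hnext; have hcu := chain_nth_lt c hC (i := index c C) (j := (index c C).+1).
rewrite ltnSn hnext nth_index // in hcu; have := hcu isT.
by rewrite (htop _ (mem_nth c hnext) (lt_trans hbc (hcu isT))) ltxx.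
Qed.

End Chains.

Section Orientation.
Variables (d : Order.disp_t) (X : finPOrderType d) (theta : ltpair X -> ltpair X).
Hypothesis theta_monotone :
  forall C, maximal_chain C -> increasing_on theta C \/ decreasing_on theta C.
Implicit Types (s t C : seq X) (a b c e u x y z : X).

Definition theta_pair x y : X * X :=
  if insub (x, y) is Some p then val (theta p) else (x, y).

Lemma theta_pairE (p : ltpair X) : theta_pair (val p).1 (val p).2 = val (theta p).
Proof. by rewrite /theta_pair -surjective_pairing valK. Qed.

(* For x < y < z this holds iff θ(e_xz) = θ(e_yz)θ(e_xy). *)
Definition flips x y z : bool := (theta_pair x z).1 == (theta_pair y z).1.

Definition oriented C t (o : bool) := forall x0 i j, i < j < size C ->
  theta_pair (nth x0 C i) (nth x0 C j) =
  if o then (nth x0 t (size C - j.+1), nth x0 t (size C - i.+1))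
  else (nth x0 t i, nth x0 t j).

Lemma maximal_chain_oriented C : maximal_chain C ->
  exists o t, [/\ maximal_chain t, size t = size C & oriented C t o].
Proof.
move=> hC; have [hCc _] := hC.
have theta_nth x0 i j (hij : i < j < size C) : theta_pair (nth x0 C i) (nth x0 C j) =
    val (theta (exist _ (nth x0 C i, nth x0 C j) (chain_nth_lt x0 hCc hij))).
  by rewrite -theta_pairE.
case: (theta_monotone hC) => -[t [ht [hs H]]]; [exists false | exists true];
  exists t; split=> // x0 i j hij; rewrite theta_nth (H _ i j hij) /=;
  by congr pair; apply: set_nth_default; lia.
Qed.

Lemma oriented_flips C t o : is_chain C -> is_chain t -> size t = size C ->
  oriented C t o -> {in C & &, forall x y z, (x < y)%O -> (y < z)%O ->
    flips x y z = o /\ ((theta_pair x z).1 == (theta_pair x y).1) = ~~ o}.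
Proof.
move=> hC ht hs H x y z hx hy hz hxy hyz.
have hij := chain_index_lt hC hx hy hxy; have hjk := chain_index_lt hC hy hz hyz.
have hk : index z C < size C by rewrite index_mem.
rewrite /flips -(nth_index x hx) -(nth_index x hy) -(nth_index x hz) !H; try lia.
have htu := lt_sorted_uniq ht.
case: o {H} => /=; rewrite !nth_uniq ?eqxx ?hs //; try split; lia.
Qed.

Lemma chain_flips s : is_chain s -> exists o, {in s & &, forall x y z,
  (x < y)%O -> (y < z)%O ->
  flips x y z = o /\ ((theta_pair x z).1 == (theta_pair x y).1) = ~~ o}.
Proof.
move=> hs; have [C hC hsC] := maximal_chain_extend hs.
have [o [t [ht htC hCt]]] := maximal_chain_oriented hC.
exists o => x y z /hsC hx /hsC hy /hsC hz.
exact: oriented_flips hC.1 ht.1 htC hCt x y z hx hy hz.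
Qed.

Lemma theta_pair_fst_eq x y z : (x < y)%O -> (y < z)%O ->
  ((theta_pair x z).1 == (theta_pair x y).1) = ~~ flips x y z.
Proof.
move=> hxy hyz; have [|o ho] := chain_flips (s := [:: x; y; z]).
  by rewrite /is_chain /= hxy hyz.
by have [|||-> ->] := ho x y z _ _ _ hxy hyz; rewrite ?inE ?eqxx ?orbT.
Qed.

Lemma flips_chain4 e x y z : (e < x)%O -> (x < y)%O -> (y < z)%O ->
  flips e x y = flips x y z /\ flips e x z = flips x y z.
Proof.
move=> hex hxy hyz; set s := [:: e; x; y; z].
have [|o ho] := chain_flips (s := s); first by rewrite /is_chain /= hex hxy hyz.
have [he hx hy hz] : [/\ e \in s, x \in s, y \in s & z \in s].
  by rewrite !inE !eqxx ?orbT.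
by rewrite (ho x y z hx hy hz hxy hyz).1 (ho e x y he hx hy hex hxy).1
  (ho e x z he hx hz hex (lt_trans hxy hyz)).1.
Qed.

Lemma flips_top C1 C2 a b c e : maximal_chain C1 -> maximal_chain C2 ->
  a \in C1 -> b \in C1 -> e \in C2 -> b \in C2 -> c \in C2 ->
  (a < b)%O -> (e < b)%O -> (b < c)%O -> flips a b c != flips e b c ->
  {in C2, forall u, (b < u)%O -> u = c}.
Proof.
move=> hC1 hC2 ha1 hb1 he2 hb2 hc2 hab heb hbc hne u hu hbu.
have hC3 := maximal_chain_splice hC1 hC2 hb1 hb2.
have [o2 h2] := chain_flips hC2.1; have [o3 h3] := chain_flips hC3.1.
have in3 v : v \in C2 -> (b < v)%O -> v \in splice C1 C2 b.
  by move=> hv hbv; rewrite mem_splice hv hbv orbT.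
have hb3 : b \in splice C1 C2 b by rewrite mem_splice hb1 lexx.
have ha3 : a \in splice C1 C2 b by rewrite mem_splice ha1 (ltW hab).
have {}hne : o3 != o2.
  by rewrite -(h3 a b c ha3 hb3 (in3 c hc2 hbc) hab hbc).1 -(h2 e b c he2 hb2 hc2 heb hbc).1.
case: (comparable_ltgtP (chain_comparable hC2.1 hu hc2)) => // huc; move: hne.
- by rewrite -(h3 b u c hb3 (in3 u hu hbu) (in3 c hc2 hbc) hbu huc).1
    -(h2 b u c hb2 hu hc2 hbu huc).1 eqxx.
- by rewrite -(h3 b c u hb3 (in3 c hc2 hbc) (in3 u hu hbu) hbc huc).1
    -(h2 b c u hb2 hc2 hu hbc huc).1 eqxx.
Qed.

Lemma flips_lower_transfer a e b c : (a < b)%O -> (e < b)%O -> (b < c)%O ->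
  flips e b c -> flips a b c.
Proof.
move=> hab heb hbc hfe; apply/negPn/negP => /negbTE hfa.
have [|C1 hC1 sub1] := maximal_chain_extend (s := [:: a; b; c]).
  by rewrite /is_chain /= hab hbc.
have [|C2 hC2 sub2] := maximal_chain_extend (s := [:: e; b; c]).
  by rewrite /is_chain /= heb hbc.
have [ha1 hb1 hc1] : [/\ a \in C1, b \in C1 & c \in C1] by rewrite !sub1 ?inE ?eqxx ?orbT.
have [he2 hb2 hc2] : [/\ e \in C2, b \in C2 & c \in C2] by rewrite !sub2 ?inE ?eqxx ?orbT.
have [o1 [t1 [ht1 hst1 H1]]] := maximal_chain_oriented hC1.
have [o2 [t2 [ht2 hst2 H2]]] := maximal_chain_oriented hC2.
have [ho1 _] := oriented_flips hC1.1 ht1.1 hst1 H1 ha1 hb1 hc1 hab hbc.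
have [ho2 _] := oriented_flips hC2.1 ht2.1 hst2 H2 he2 hb2 hc2 heb hbc.
rewrite hfa in ho1; rewrite hfe in ho2; rewrite -{}ho1 in H1; rewrite -{}ho2 in H2.
have top2 : (index c C2).+1 = size C2.
  apply: (chain_last_index hC2.1 hc2 hbc).
  by apply: (flips_top hC1 hC2 ha1 hb1 he2 hb2 hc2 hab heb hbc); rewrite hfa hfe.
have hab1 := chain_index_lt hC1.1 ha1 hb1 hab.
have hbc1 := chain_index_lt hC1.1 hb1 hc1 hbc.
have hbc2 := chain_index_lt hC2.1 hb2 hc2 hbc.
have hc1s : index c C1 < size C1 by rewrite index_mem.
have := H1 b (index b C1) (index c C1); have := H2 b (index b C2) (index c C2).
rewrite !nth_index // hbc1 hbc2 hc1s -top2 ltnSn subnn => /(_ isT) -> /(_ isT) [head2 _].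
apply: (maximal_chain_head (x0 := b) (u := nth b t1 (index b C1).-1) ht2).
by rewrite head2; apply: chain_nth_lt ht1.1 _; rewrite hst1; lia.
Qed.

Lemma flips_lower_indep a e b c : (a < b)%O -> (e < b)%O -> (b < c)%O ->
  flips e b c = flips a b c.
Proof.
by move=> hab heb hbc; apply/idP/idP; apply: flips_lower_transfer.
Qed.

Definition flipped_below x y : bool := [exists e, (e < x)%O && flips e x y].

Lemma flipped_below_split x y z : (x < y)%O -> (y < z)%O ->
  flipped_below x z = flipped_below x y (+) flipped_below y z (+) flips x y z.
Proof.
move=> hxy hyz.
have -> : flipped_below y z = flips x y z.
  apply/existsP/idP => [[e /andP[hey]]|hf]; last by exists x; rewrite hxy.
  by rewrite (flips_lower_indep hxy hey hyz).
case: (boolP [exists e, (e < x)%O]) => [/existsP[e hex]|/existsPn hmin].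
- have [hexy hexz] := flips_chain4 hex hxy hyz.
  have below w : (x < w)%O -> flipped_below x w = flips e x w.
    move=> hxw; apply/existsP/idP => [[e' /andP[he'x]]|hf]; last by exists e; rewrite hex.
    by rewrite (flips_lower_indep hex he'x hxw).
  rewrite (below y hxy) (below z (lt_trans hxy hyz)) hexy hexz.
  by case: (flips x y z).
- have nobelow w : flipped_below x w = false.
    by apply/existsP => -[e /andP[hex _]]; move: (hmin e); rewrite hex.
  by rewrite !nobelow addbb.
Qed.

End Orientation.

Lemma incmul_eB_fst (d : Order.disp_t) (X : finPOrderType d) (K : fieldType)
  (p q r : ltpair X) : eB K p = incmul (eB K q) (eB K r) -> (val p).1 = (val q).1.
Proof.
move=> /(congr1 (fun f : incalg X K => f (val p))).
rewrite /eB /e_ /incmul !ffunE /= !eqxx /=.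
case: (eqVneq (val p).1 (val q).1) => // hne.
rewrite big1 => [|z _]; last by rewrite ffunE /= (negbTE hne) mul0r.
by move/eqP; rewrite oner_eq0.
Qed.

Theorem lemma2p8 (d : Order.disp_t) (X : finPOrderType d) (K : fieldType)
  (hX : connected_poset X) (theta : ltpair X -> ltpair X)
  (htheta : in_M theta) :
  exists sigma : ltpair X -> K,
    (forall p, sigma p != 0%R) /\ compatible sigma theta.
Proof.
have theta_monotone := htheta.2.
exists (fun p => (-1) ^+ flipped_below theta (val p).1 (val p).2)%R; split.
  by move=> p; rewrite signr_eq0.
move=> x y z pxy pyz pxz Exy Eyz Exz.
have hxy : (x < y)%O by move: (valP pxy); rewrite Exy.
have hyz : (y < z)%O by move: (valP pyz); rewrite Eyz.
have theta_fst p u v : val p = (u, v) -> (val (theta p)).1 = (theta_pair theta u v).1.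
  by move=> hp; rewrite -theta_pairE hp.
rewrite Exy Eyz Exz /= (flipped_below_split theta_monotone hxy hyz) !signr_addb.
split=> /incmul_eB_fst; rewrite (theta_fst _ _ _ Exz).
- rewrite (theta_fst _ _ _ Exy) => /eqP.
  by rewrite theta_pair_fst_eq // => /negbTE ->; rewrite mulr1.
- rewrite (theta_fst _ _ _ Eyz) => hflip.
  have -> : flips theta x y z by apply/eqP.
  by rewrite mulrN1.
Qed.
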